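(* Let $X,S\in\operatorname{rep}(Q)$ with $\dim_K\operatorname{Ext}^1_{KQ}(S,X)=1$ and let $R$ be $R_d$ or $R_{d,\mathrm{str}}$. Write $[A,B]^1=\dim_K\operatorname{Ext}^1_R(A,B)$. (i) If $V,V'\subseteq\Phi(X)$ are $R$-submodules with $[\Phi(S),\Phi(X)/V]^1=[\Phi(S),\Phi(X)/V']^1=1$, then $[\Phi(S),\Phi(X)/(V+V')]^1=1$. (ii) If $W,W'\subseteq\Phi(S)$ are $R$-submodules with $[W,\Phi(X)]^1=[W',\Phi(X)]^1=1$, then $[W\cap W',\Phi(X)]^1=1$.
   Context: $K=\mathbb{C}$; $Q$ a finite quiver, $\operatorname{rep}(Q)$ its finite-dimensional representations. For $d\geqslant1$, $Q_d$ has vertices $v(Q)\times\{1,\dots,d\}$, arrows $(i,r)\to(i,r+1)$ ($r\leqslant d-1$) and $(i,r)\to(j,r)$ for each arrow $i\to j$ of $Q$, $r\in\{1,\dots,d\}$. For $d\geqslant2$, $Q_{d,\mathrm{str}}$ has the same vertices and vertical arrows and arrows $(i,r)\to(j,r-1)$ for each arrow $i\to j$, $r\in\{2,\dots,d\}$. $R_d=KQ_d/I$, $R_{d,\mathrm{str}}=KQ_{d,\mathrm{str}}/I$ with $I$ the ideal identifying all paths with equal source and target. $\Phi(X)_{(i,r)}=X_i$, identity maps on vertical arrows, $X_{i\to j}$ on arrows coming from $i\to j$. *)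

(* K = C is modelled as complex numbers over Stdlib's reals
   (Rstruct makes Rdefinitions.R a realType, hence an rcfType, and
   real_closed.complex builds R[i]). *)
From HB Require Import structures.
From mathcomp Require Import all_boot all_order all_algebra.
From mathcomp Require Import reals Rstruct.
From mathcomp.real_closed Require Import complex.
Set Implicit Arguments. Unset Strict Implicit. Unset Printing Implicit Defensive.
Import Order.TTheory GRing.Theory Num.Theory.
Local Open Scope ring_scope.

Definition K : fieldType := (Rdefinitions.R)[i].

(* Vertices 'I_nv, arrows 'I_na.  Vectors are ROW vectors: the map of   *)
(* an arrow a acts by  x |-> x *m qmap a.                               *)
Record quiver := Quiver {
  nv : nat; na : nat;
  qsrc : 'I_na -> 'I_nv; qtgt : 'I_na -> 'I_nv }.

Record qrep (Q : quiver) := QRep {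
  qdim : 'I_(nv Q) -> nat;
  qmap : forall a : 'I_(na Q), 'M[K]_(qdim (qsrc a), qdim (qtgt a)) }.

(* Ext^1_{KQ}(S,X): since KQ has no relations, every cochain
   (f_a : S_{s a} -> X_{t a})_a is a cocycle; coboundaries are
   a |-> S_a g_{t a} - g_{s a} X_a.  dim Ext^1 = k is stated as: there are
   k cochains forming a basis of the quotient (cochains / coboundaries). *)
Definition qcochain Q (S X : qrep Q) :=
  forall a : 'I_(na Q), 'M[K]_(qdim S (qsrc a), qdim X (qtgt a)).

Definition qcob Q (S X : qrep Q) (g : forall i, 'M[K]_(qdim S i, qdim X i))
  : qcochain S X :=
  fun a => qmap S a *m g (qtgt a) - g (qsrc a) *m qmap X a.

Definition qisB Q (S X : qrep Q) (f : qcochain S X) : Prop :=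
  exists g : forall i, 'M[K]_(qdim S i, qdim X i), forall a, f a = qcob g a.

Definition qlin Q (S X : qrep Q) k (c : 'I_k -> K) (F : 'I_k -> qcochain S X)
  : qcochain S X := fun a => \sum_(j < k) c j *: F j a.

Definition qsub Q (S X : qrep Q) (f h : qcochain S X) : qcochain S X :=
  fun a => f a - h a.

Definition ext1KQ_dim_is Q (S X : qrep Q) (k : nat) : Prop :=
  exists F : 'I_k -> qcochain S X,
    (forall c : 'I_k -> K, qisB (qlin c F) -> forall j, c j = 0) /\
    (forall f : qcochain S X, exists c : 'I_k -> K, qisB (qsub f (qlin c F))).

(* Representations of Q_d (str = false) and Q_{d,str} (str = true).    *)
(* Rows are indexed 0..d-1 (row r here = row r+1 of the paper).        *)
(*  vertical arrow (i,r) -> (i,r+1)            : sver i r   (r+1 < d)  *)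
(*  arrow from a : i -> j of Q :                                        *)
(*    Q_d      : (i,r)   -> (j,r)               : shor a r   (r < d)    *)
(*    Q_d,str  : (i,r+1) -> (j,r)               : shor a r   (r+1 < d)  *)
(*  i.e. shor a r : (i, r + str) -> (j, r), defined for r + str < d.    *)
(* An R-module is given as a SUBQUOTIENT  U/L  of such a representation *)
(* (U, L families of subspaces, as row spaces of square matrices), so   *)
(* that submodules Phi(S) ⊇ W and quotients Phi(X)/V are available     *)
(* without choosing bases.  Modules actually used below are Phi(X),     *)
(* Phi(X)/V, W ⊆ Phi(S).                                               *)
Record sqmod (Q : quiver) (str : bool) := SQMod {
  sdim : 'I_(nv Q) -> nat -> nat;
  sver : forall i r, 'M[K]_(sdim i r, sdim i r.+1);
  shor : forall (a : 'I_(na Q)) r, 'M[K]_(sdim (qsrc a) ((r + str)%N), sdim (qtgt a) r);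
  sU : forall i r, 'M[K]_(sdim i r);
  sL : forall i r, 'M[K]_(sdim i r) }.

Definition Phi Q (str : bool) (X : qrep Q) : sqmod Q str :=
  @SQMod Q str (fun i _ => qdim X i) (fun i _ => 1%:M) (fun a _ => qmap X a)
    (fun i _ => 1%:M) (fun i _ => 0).

(* V is an R-submodule of M (M with U = everything, L = 0). *)
Definition is_submod Q str (d : nat) (M : sqmod Q str)
  (V : forall i r, 'M[K]_(sdim M i r)) : Prop :=
  (forall i r, (r.+1 < d)%N -> (V i r *m sver M i r <= V i r.+1)%MS) /\
  (forall a r, ((r + str)%N < d)%N -> (V (qsrc a) ((r + str)%N) *m shor M a r <= V (qtgt a) r)%MS).

Definition quotmod Q str (M : sqmod Q str) (V : forall i r, 'M[K]_(sdim M i r)) :=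
  @SQMod Q str (sdim M) (sver M) (shor M) (sU M) V.
Definition submod Q str (M : sqmod Q str) (W : forall i r, 'M[K]_(sdim M i r)) :=
  @SQMod Q str (sdim M) (sver M) (shor M) W (sL M).

(* A linear map  M_v = U/L -> N_w = U'/L'  is represented by an ambient
   matrix F with U F <= U' and L F <= L'; F, F' represent the same map iff
   U (F - F') <= L'. *)
Definition hom_ok m n (U L : 'M[K]_m) (U' L' : 'M[K]_n) (F : 'M[K]_(m, n)) :=
  ((U *m F <= U')%MS && (L *m F <= L')%MS).


Record cochain Q str (M N : sqmod Q str) := Cochain {
  cv : forall i r, 'M[K]_(sdim M i r, sdim N i r.+1);
  ch : forall (a : 'I_(na Q)) r, 'M[K]_(sdim M (qsrc a) ((r + str)%N), sdim N (qtgt a) r) }.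

Definition cochain_ok Q str d (M N : sqmod Q str) (f : cochain M N) : Prop :=
  (forall i r, (r.+1 < d)%N ->
     hom_ok (sU M i r) (sL M i r) (sU N i r.+1) (sL N i r.+1) (cv f i r)) /\
  (forall a r, ((r + str)%N < d)%N ->
     hom_ok (sU M (qsrc a) ((r + str)%N)) (sL M (qsrc a) ((r + str)%N))
            (sU N (qtgt a) r) (sL N (qtgt a) r) (ch f a r)).

(* Cocycle condition: the extension E_v = M_v (+) N_v with arrow maps
   [[M_b, f_b],[0, N_b]] satisfies the commutativity relations generating
   I, i.e. for each arrow a : i -> j of Q and each commutative square
     (i,r+str) -> (j,r) -> (j,r+1)   =   (i,r+str) -> (i,r+1+str) -> (j,r+1)
   (r + str + 1 < d), the off-diagonal blocks agree as maps U/L -> U'/L'. *)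
Definition cocycle Q str d (M N : sqmod Q str) (f : cochain M N) : Prop :=
  forall (a : 'I_(na Q)) r, ((r + str)%N + 1 < d)%N ->
    (sU M (qsrc a) ((r + str)%N) *m
       (shor M a r *m cv f (qtgt a) r + ch f a r *m sver N (qtgt a) r
        - (sver M (qsrc a) ((r + str)%N) *m ch f a r.+1
           + cv f (qsrc a) ((r + str)%N) *m shor N a r.+1))
     <= sL N (qtgt a) r.+1)%MS.

Definition isB Q str d (M N : sqmod Q str) (f : cochain M N) : Prop :=
  exists g : forall i r, 'M[K]_(sdim M i r, sdim N i r),
    (forall i r, (r < d)%N -> hom_ok (sU M i r) (sL M i r) (sU N i r) (sL N i r) (g i r)) /\
    (forall i r, (r.+1 < d)%N ->
       (sU M i r *m (cv f i r - (sver M i r *m g i r.+1 - g i r *m sver N i r))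
        <= sL N i r.+1)%MS) /\
    (forall a r, ((r + str)%N < d)%N ->
       (sU M (qsrc a) ((r + str)%N) *m
          (ch f a r - (shor M a r *m g (qtgt a) r - g (qsrc a) ((r + str)%N) *m shor N a r))
        <= sL N (qtgt a) r)%MS).

Definition clin Q str (M N : sqmod Q str) k (c : 'I_k -> K)
  (F : 'I_k -> cochain M N) : cochain M N :=
  Cochain (fun i r => \sum_(j < k) c j *: cv (F j) i r)
          (fun a r => \sum_(j < k) c j *: ch (F j) a r).

Definition csub Q str (M N : sqmod Q str) (f h : cochain M N) : cochain M N :=
  Cochain (fun i r => cv f i r - cv h i r) (fun a r => ch f a r - ch h a r).

Definition ext1_dim_is Q str d (M N : sqmod Q str) (k : nat) : Prop :=
  exists F : 'I_k -> cochain M N,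
    (forall j, cochain_ok d (F j) /\ cocycle d (F j)) /\
    (forall c : 'I_k -> K, isB d (clin c F) -> forall j, c j = 0) /\
    (forall f : cochain M N, cochain_ok d f -> cocycle d f ->
       exists c : 'I_k -> K, isB d (csub f (clin c F))).

Arguments is_submod {Q str} d M V.
Arguments quotmod {Q str} M V.
Arguments submod {Q str} M W.

From mathcomp Require Import all_boot all_order all_algebra.
From mathcomp Require Import ring zify.
Set Implicit Arguments. Unset Strict Implicit. Unset Printing Implicit Defensive.
Import Order.TTheory GRing.Theory Num.Theory.
Local Open Scope ring_scope.

(* A KQ-cochain h of (S, X), placed on the horizontal arrows of every row with
   zero vertical part, is an R-cocycle from W <= Phi(S) to Phi(X)/V; this gives
   a map Ext^1_KQ(S, X) -> Ext^1_R(W, Phi(X)/V).  The map is onto: subtracting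
   from an R-cocycle the coboundary of the partial sums of its vertical parts
   leaves a horizontal part that, by the cocycle condition, does not depend on
   the row (modulo V when W = Phi(S), and on W when V = 0).  When both Ext
   groups are one-dimensional it is therefore injective.  On the other hand,
   modulo KQ-coboundaries every cochain in its kernel lands in V on row 0 (when
   W = Phi(S)), resp. vanishes on W in the top row (when V = 0).  A cochain
   landing in V + V' is a sum of one landing in V and one landing in V', and
   one vanishing on W :&: W' is a sum of one vanishing on W and one vanishing
   on W'; so injectivity for V and V' (resp. W and W') gives injectivity, hence
   bijectivity, for V + V' (resp. W :&: W'). *)

Ltac mxring := apply/matrixP => ? ?; rewrite !mxE; ring.

Lemma split_on_capmx n p (A B : 'M[K]_n) (h : 'M[K]_(n, p)) :
  (A :&: B)%MS *m h = 0 -> exists h', A *m h' = A *m h /\ B *m h' = 0.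
Proof.
move=> capAB_h.
pose P := proj_mx (A :\: B)%MS B.
have P_B m (Y : 'M_(m, n)) : (Y <= B)%MS -> Y *m P = 0.
  by apply: proj_mx_0; apply: capmx_diff.
have P_AB m (Y : 'M_(m, n)) : (Y <= A :\: B)%MS -> Y *m P = Y.
  by apply: proj_mx_id; apply: capmx_diff.
clearbody P.
have /sub_addsmxP[u defA] : (A <= A :\: B + A :&: B)%MS by rewrite addsmx_diff_cap_eq.
have AP : A *m P = u.1 *m (A :\: B)%MS.
  by rewrite [in LHS]defA mulmxDl -!mulmxA P_AB // P_B ?capmxSr // mulmx0 addr0.
exists (P *m h); split; last by rewrite mulmxA P_B ?mul0mx.
by rewrite mulmxA AP [in RHS]defA mulmxDl -(mulmxA u.2) capAB_h mulmx0 addr0.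
Qed.

Lemma cob_defectD m n p q (v v' : 'M[K]_(m, n)) (A : 'M[K]_(m, p))
    (B : 'M[K]_(q, n)) (g g' : 'M[K]_(p, n)) (k k' : 'M[K]_(m, q)) :
  v + v' - (A *m (g + g') - (k + k') *m B) =
  (v - (A *m g - k *m B)) + (v' - (A *m g' - k' *m B)).
Proof. by rewrite mulmxDr mulmxDl [- (_ *m _ + _)]opprD addrACA opprD addrACA. Qed.

Section Coboundaries.
Variables (Q : quiver) (str : bool) (d : nat) (M N : sqmod Q str).
Implicit Types f : cochain M N.

Definition cadd f f' : cochain M N :=
  Cochain (fun i r => cv f i r + cv f' i r) (fun a r => ch f a r + ch f' a r).

Definition cscale (c : K) f : cochain M N :=
  Cochain (fun i r => c *: cv f i r) (fun a r => c *: ch f a r).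

Lemma eq_isB f f' :
  (forall i r, cv f i r = cv f' i r) -> (forall a r, ch f a r = ch f' a r) ->
  isB d f -> isB d f'.
Proof.
move=> Ev Eh [g [ok_g [Bv Bh]]]; exists g; split=> //; split=> [i r | a r].
  by rewrite -Ev; apply: Bv.
by rewrite -Eh; apply: Bh.
Qed.

Lemma isB_cadd f f' : isB d f -> isB d f' -> isB d (cadd f f').
Proof.
move=> [g [ok_g [Bv Bh]]] [g' [ok_g' [Bv' Bh']]].
exists (fun i r => g i r + g' i r); split; [|split] => [i r hr | i r hr | a r hr] /=.
- case/andP: (ok_g i r hr) => ? ?; case/andP: (ok_g' i r hr) => ? ?.
  by rewrite /hom_ok !mulmxDr !addmx_sub.
- by rewrite cob_defectD mulmxDr; apply: addmx_sub; [apply: Bv | apply: Bv'].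
- by rewrite cob_defectD mulmxDr; apply: addmx_sub; [apply: Bh | apply: Bh'].
Qed.

Lemma isB_cscale c f : isB d f -> isB d (cscale c f).
Proof.
move=> [g [ok_g [Bv Bh]]].
exists (fun i r => c *: g i r); split; [|split] => [i r hr | i r hr | a r hr] /=.
- case/andP: (ok_g i r hr) => ? ?.
  by rewrite /hom_ok -!scalemxAr !scalemx_sub.
- by rewrite -scalemxAr -scalemxAl -!scalerBr -scalemxAr scalemx_sub //; apply: Bv.
- by rewrite -scalemxAr -scalemxAl -!scalerBr -scalemxAr scalemx_sub //; apply: Bh.
Qed.

End Coboundaries.

Lemma is_submod_adds Q str d (M : sqmod Q str) (V V' : forall i r, 'M[K]_(sdim M i r)) :
  is_submod d M V -> is_submod d M V' ->
  is_submod d M (fun i r => (V i r + V' i r)%MS).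
Proof.
move=> [Vv Vh] [Vv' Vh']; split=> *; rewrite addsmxMr addsmxS //.
- exact: Vv. - exact: Vv'. - exact: Vh. - exact: Vh'.
Qed.

Lemma is_submod_cap Q str d (M : sqmod Q str) (V V' : forall i r, 'M[K]_(sdim M i r)) :
  is_submod d M V -> is_submod d M V' ->
  is_submod d M (fun i r => (V i r :&: V' i r)%MS).
Proof.
move=> [Vv Vh] [Vv' Vh']; split=> *; rewrite sub_capmx; apply/andP; split.
- exact: submx_trans (submxMr _ (capmxSl _ _)) (Vv _ _ _).
- exact: submx_trans (submxMr _ (capmxSr _ _)) (Vv' _ _ _).
- exact: submx_trans (submxMr _ (capmxSl _ _)) (Vh _ _ _).
- exact: submx_trans (submxMr _ (capmxSr _ _)) (Vh' _ _ _).
Qed.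

Lemma is_submod_Phi_mono Q str d (Y : qrep Q) (V : forall i (r : nat), 'M[K]_(qdim Y i)) :
  is_submod d (Phi str Y) V ->
  forall i r s, (r <= s < d)%N -> (V i r <= V i s)%MS.
Proof.
move=> [Vv _] i r s /andP[]; elim: s => [|s IH]; first by rewrite leqn0 => /eqP->.
rewrite leq_eqVlt => /orP[/eqP-> // | lt_rs] lt_sd.
apply: submx_trans (IH lt_rs (ltnW lt_sd)) _.
by have := Vv i s lt_sd; rewrite /= mulmx1.
Qed.

Lemma qcobD Q (S X : qrep Q) (g g' : forall i, 'M[K]_(qdim S i, qdim X i)) a :
  qcob (fun i => g i + g' i) a = qcob g a + qcob g' a.
Proof. by rewrite /qcob mulmxDr mulmxDl opprD addrACA. Qed.

Definition full_submod Q (Y : qrep Q) : forall i (r : nat), 'M[K]_(qdim Y i) :=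
  fun i _ => 1%:M.
Definition zero_submod Q (Y : qrep Q) : forall i (r : nat), 'M[K]_(qdim Y i) :=
  fun i _ => 0.

Section Lift.
Variables (Q : quiver) (S X : qrep Q) (str : bool) (d : nat).
Variables (W : forall i (r : nat), 'M[K]_(qdim S i))
  (V : forall i (r : nat), 'M[K]_(qdim X i)).
Local Notation M := (submod (Phi str S) W).
Local Notation N := (quotmod (Phi str X) V).
Implicit Types (h : qcochain S X) (f : cochain M N).
Local Notation pot := (forall i (r : nat), 'M[K]_(qdim S i, qdim X i)).

Definition lift_cochain h : cochain M N :=
  @Cochain _ _ M N (fun i r => 0) (fun a r => h a).

Definition lift_onto :=
  forall f, cocycle d f -> exists h, isB d (csub f (lift_cochain h)).

Definition lift_inj := forall h, isB d (lift_cochain h) -> qisB h.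

Lemma eq_isB_lift h h' :
  (forall a, h a = h' a) -> isB d (lift_cochain h) -> isB d (lift_cochain h').
Proof. by move=> E; apply: eq_isB => //= a r; rewrite E. Qed.

Lemma isB_lift h :
  (forall a r, (r + str < d)%N -> (W (qsrc a) (r + str)%N *m h a <= V (qtgt a) r)%MS) ->
  isB d (lift_cochain h).
Proof.
move=> small; exists (fun i r => 0); split; [|split] => [i r _ | i r _ | a r hr] /=.
- by rewrite /hom_ok submx1 mul0mx sub0mx.
- by rewrite mulmx0 mul0mx subrr subr0 mulmx0 sub0mx.
- by rewrite mulmx0 mul0mx subrr subr0; apply: small.
Qed.

Lemma isB_lift_qcob (g : forall i, 'M[K]_(qdim S i, qdim X i)) :
  isB d (lift_cochain (qcob g)).
Proof.
exists (fun i r => g i); split; [|split] => [i r _ | i r _ | a r _] /=.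
- by rewrite /hom_ok submx1 mul0mx sub0mx.
- by rewrite mul1mx mulmx1 subrr subr0 mulmx0 sub0mx.
- by rewrite /qcob subrr mulmx0 sub0mx.
Qed.

Lemma lift_ok_cocycle h : cochain_ok d (lift_cochain h) /\ cocycle d (lift_cochain h).
Proof.
split; [split|] => [i r _ | a r _ | a r _] /=;
  try by rewrite /hom_ok submx1 mul0mx sub0mx.
by rewrite !mulmx0 !mul0mx mulmx1 mul1mx add0r addr0 subrr mulmx0 sub0mx.
Qed.

Lemma isB_liftD h h' :
  isB d (lift_cochain h) -> isB d (lift_cochain h') ->
  isB d (lift_cochain (fun a => h a + h' a)).
Proof. by move=> Bh Bh'; apply: eq_isB (isB_cadd Bh Bh') => /= *; rewrite ?addr0. Qed.

Lemma isB_liftZ c h :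
  isB d (lift_cochain h) -> isB d (lift_cochain (fun a => c *: h a)).
Proof. by move=> Bh; apply: eq_isB (isB_cscale c Bh) => /= *; rewrite ?scaler0. Qed.

Definition row_cochain f (g : pot) r : qcochain S X :=
  fun a => ch f a r - (qmap S a *m g (qtgt a) r - g (qsrc a) (r + str)%N *m qmap X a).

Lemma isB_csub_lift_row f (g : pot) h :
  (forall i r, (r.+1 < d)%N -> g i r.+1 = g i r + cv f i r) ->
  (forall a r, (r + str < d)%N ->
     (W (qsrc a) (r + str)%N *m (row_cochain f g r a - h a) <= V (qtgt a) r)%MS) ->
  isB d (csub f (lift_cochain h)).
Proof.
move=> gS small; exists g; split; [|split] => [i r _ | i r hr | a r hr] /=.
- by rewrite /hom_ok submx1 mul0mx sub0mx.
- have -> : cv f i r - 0 - (1%:M *m g i r.+1 - g i r *m 1%:M) = 0.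
    by rewrite gS // mul1mx mulmx1; mxring.
  by rewrite mulmx0 sub0mx.
- by rewrite addrAC; apply: small.
Qed.

Lemma cocycle_row_cochain f (g : pot) :
  (forall i r, (r.+1 < d)%N -> g i r.+1 = g i r + cv f i r) -> cocycle d f ->
  forall a r, (r + str + 1 < d)%N ->
  (W (qsrc a) (r + str)%N *m (row_cochain f g r a - row_cochain f g r.+1 a)
     <= V (qtgt a) r.+1)%MS.
Proof.
move=> gS cof a r hr.
suff -> : row_cochain f g r a - row_cochain f g r.+1 a =
    qmap S a *m cv f (qtgt a) r + ch f a r -
    (ch f a r.+1 + cv f (qsrc a) (r + str)%N *m qmap X a).
  by have := cof a r hr; rewrite /= !mul1mx !mulmx1.
rewrite /row_cochain addSn !gS; try lia.
by rewrite !mulmxDr !mulmxDl; mxring.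
Qed.
Lemma lift_inj_of_dim1 :
  lift_onto -> ext1KQ_dim_is S X 1 -> ext1_dim_is d M N 1 -> lift_inj.
Proof.
move=> onto [FK [_ spanK]] [F [okF [indF _]]] h Bh.
have qspan h' : exists c g, forall a, h' a = c *: FK ord0 a + qcob g a.
  have [c [g Eg]] := spanK h'; exists (c ord0), g => a.
  by rewrite -Eg /qsub /qlin big_ord1 addrC subrK.
have [c [g Eh]] := qspan h.
have [c0 | nz_c] := eqVneq c 0.
  by exists g => a; rewrite Eh c0 scale0r add0r.
(* Otherwise the generator of Ext^1_KQ, hence every KQ-cochain, lifts to a
   coboundary; as the lift is onto, Ext^1_R would vanish. *)
have BFK : isB d (lift_cochain (FK ord0)).
  apply: eq_isB_lift (isB_liftZ c^-1 (isB_liftD Bh (isB_liftZ (-1) (isB_lift_qcob g)))).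
  by move=> a; rewrite Eh scaleN1r addrK scalerA mulVf // scale1r.
have [k Bk] := onto _ (okF ord0).2.
have [c' [g' Ek]] := qspan k.
have Blift_k : isB d (lift_cochain k).
  apply: eq_isB_lift (isB_liftD (isB_liftZ c' BFK) (isB_lift_qcob g')) => a.
  by rewrite Ek.
have BF : isB d (clin (fun _ => 1) F).
  apply: eq_isB (isB_cadd Bk Blift_k) => [i r | a r];
    by cbn [cv ch clin csub cadd lift_cochain]; rewrite big_ord1 scale1r subrK.
by have /eqP := indF _ BF ord0; rewrite oner_eq0.
Qed.

Lemma ext1_dim_of_lift_bij k :
  lift_onto -> lift_inj -> ext1KQ_dim_is S X k -> ext1_dim_is d M N k.
Proof.
move=> onto inj [FK [indK spanK]].
exists (fun j => lift_cochain (FK j)); split; [|split].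
- by move=> j; apply: lift_ok_cocycle.
- move=> c Bc; apply: indK; apply: inj.
  apply: eq_isB Bc => [i r | a r]; cbn [cv ch clin lift_cochain] => //.
  by rewrite big1 // => j _; rewrite scaler0.
- move=> f _ cof; have [h Bh] := onto f cof.
  have [c [g Eg]] := spanK h; exists c.
  have Bg : isB d (lift_cochain (fun a => h a - qlin c FK a)).
    by apply: eq_isB_lift (isB_lift_qcob g) => a; rewrite -Eg.
  apply: eq_isB (isB_cadd Bh Bg) => [i r | a r];
    cbn [cv ch clin csub cadd lift_cochain].
    by rewrite big1 ?subr0 ?addr0 // => j _; rewrite scaler0.
  by rewrite addrA subrK.
Qed.

End Lift.

Section Cases.
Variables (Q : quiver) (S X : qrep Q) (str : bool) (d : nat).
Implicit Types (W : forall i (r : nat), 'M[K]_(qdim S i))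
  (V : forall i (r : nat), 'M[K]_(qdim X i)) (h : qcochain S X).

Lemma lift_onto_quot V : is_submod d (Phi str X) V -> lift_onto str d (full_submod S) V.
Proof.
move=> sV f cof.
pose g i r : 'M[K]_(qdim S i, qdim X i) :=
  \sum_(k < r) (cv f i k : 'M_(qdim S i, qdim X i)).
have gS i r : (r.+1 < d)%N -> g i r.+1 = g i r + cv f i r by rewrite /g big_ord_recr.
clearbody g; exists (row_cochain f g 0).
apply: (isB_csub_lift_row gS) => a r; rewrite mul1mx.
elim: r => [|r IH] hr; first by rewrite subrr sub0mx.
have hr1 : (r + str + 1 < d)%N by lia.
have := cocycle_row_cochain gS cof a hr1; rewrite /full_submod mul1mx.
have le_r : (V (qtgt a) r <= V (qtgt a) r.+1)%MS by apply: (is_submod_Phi_mono sV); lia.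
have := submx_trans (IH ltac:(lia)) le_r.
move: (row_cochain f g 0 a) (row_cochain f g r a) (row_cochain f g r.+1 a).
move=> x0 x x1 le0 le1.
rewrite (_ : x1 - x0 = (x - x0) - (x - x1)); last by rewrite opprB [RHS]addrC subrKA.
by apply: addmx_sub; rewrite ?eqmx_opp.
Qed.

Lemma lift_onto_sub W : is_submod d (Phi str S) W -> lift_onto str d W (zero_submod X).
Proof.
move=> sW f cof.
(* The potential is normalised at the top row: here W, not V, grows with r. *)
pose g i r : 'M[K]_(qdim S i, qdim X i) :=
  - \sum_(r <= k < d.-1) (cv f i k : 'M_(qdim S i, qdim X i)).
have gS i r : (r.+1 < d)%N -> g i r.+1 = g i r + cv f i r.
  by move=> hr; rewrite /g (big_ltn (m := r)) ?ltn_predRL // opprD addrAC addNr add0r.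
clearbody g; exists (row_cochain f g (d.-1 - str)).
apply: (isB_csub_lift_row gS) => a r hr; rewrite /zero_submod.
have [k hk] : exists k, (r + k = d.-1 - str)%N by exists (d.-1 - str - r)%N; lia.
elim: k r hk hr => [|k IH] r hk hr.
  by rewrite -hk addn0 subrr mulmx0 sub0mx.
have hr1 : (r + str + 1 < d)%N by lia.
have step := cocycle_row_cochain gS cof a hr1; rewrite /zero_submod in step.
have mono : (W (qsrc a) (r + str)%N <= W (qsrc a) (r.+1 + str)%N)%MS.
  by apply: (is_submod_Phi_mono sW); lia.
have /(submx_trans (submxMr _ mono)) := IH r.+1 ltac:(lia) ltac:(lia).
move: step; move: (row_cochain f g r a) (row_cochain f g r.+1 a).
move: (row_cochain f g (d.-1 - str) a) => xt x x1 le1 le2.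
rewrite (_ : x - xt = (x - x1) + (x1 - xt)); last by rewrite addrA subrK.
by rewrite mulmxDr addmx_sub.
Qed.

Lemma lift_kernel_quot V :
  (if str then 2 <= d else 1 <= d)%N -> is_submod d (Phi str X) V ->
  forall h, isB d (lift_cochain str (full_submod S) V h) ->
  exists g, forall a, (h a - qcob g a <= V (qtgt a) 0%N)%MS.
Proof.
move=> hd [_ Vh] h [g [_ [Bv Bh]]]; exists (fun i => g i 0%N) => a; rewrite /qcob.
have := Bh a 0%N; cbn [ch lift_cochain shor sL sU submod quotmod Phi].
rewrite /full_submod mul1mx.
case: str hd Vh Bv Bh => hd Vh Bv Bh /(_ hd) le_h; last exact: le_h.
have := Bv (qsrc a) 0%N hd; have := Vh a 0%N hd.
cbn [cv lift_cochain shor sver sL sU submod quotmod Phi].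
rewrite !mul1mx mulmx1 sub0r opprB => le_V le_g.
have one : (0 + true)%N = 1%N by [].
rewrite one in le_h le_V.
move: (h a) (g (qtgt a) 0%N) (g (qsrc a) 0%N) (g (qsrc a) 1%N) le_h le_g.
move=> x y z0 z1 le_h le_g.
rewrite (_ : x - (qmap S a *m y - z0 *m qmap X a) =
    (x - (qmap S a *m y - z1 *m qmap X a)) + (z0 - z1) *m qmap X a).
  exact: addmx_sub le_h (submx_trans (submxMr _ le_g) le_V).
by rewrite mulmxBl; mxring.
Qed.

Lemma lift_kernel_sub W :
  (if str then 2 <= d else 1 <= d)%N -> is_submod d (Phi str S) W ->
  forall h, isB d (lift_cochain str W (zero_submod X) h) ->
  exists g, forall a, W (qsrc a) d.-1 *m (h a - qcob g a) = 0.
Proof.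
move=> hd [_ Wh] h [g [_ [Bv Bh]]]; exists (fun i => g i d.-1) => a; rewrite /qcob.
apply/eqP; rewrite -submx0.
case: str hd Wh Bv Bh => hd Wh Bv Bh; last first.
  have := Bh a d.-1; cbn [ch lift_cochain shor sL sU submod quotmod Phi].
  have zero : (d.-1 + false)%N = d.-1 by rewrite addn0.
  rewrite /zero_submod zero; apply; lia.
case: d hd Bv Bh Wh => [|[|e]] // _ Bv Bh Wh.
have one : (e + true)%N = e.+1 by rewrite addn1.
have := Bh a e; have := Bv (qtgt a) e; have := Wh a e.
cbn [ch cv lift_cochain shor sver sL sU submod quotmod Phi]; rewrite /zero_submod one.
move=> /(_ (ltnSn _)) /submxP[u defWS] /(_ (ltnSn _)) le_g /(_ (ltnSn _)) le_h.
rewrite !mul1mx mulmx1 sub0r opprB submx0 in le_g.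
rewrite [e.+2.-1]/=.
move: (h a) (g (qtgt a) e) (g (qtgt a) e.+1) (g (qsrc a) e.+1) le_h le_g.
move=> x y0 y1 z le_h /eqP le_g.
rewrite (_ : x - (qmap S a *m y1 - z *m qmap X a) =
    (x - (qmap S a *m y0 - z *m qmap X a)) + qmap S a *m (y0 - y1)).
  by rewrite mulmxDr addmx_sub // mulmxA defWS -mulmxA le_g mulmx0 sub0mx.
by rewrite mulmxBr; mxring.
Qed.

Lemma isB_lift_quot V : is_submod d (Phi str X) V ->
  forall h, (forall a, (h a <= V (qtgt a) 0%N)%MS) ->
  isB d (lift_cochain str (full_submod S) V h).
Proof.
move=> sV h small; apply: isB_lift => a r hr; rewrite /full_submod mul1mx.
by apply: submx_trans (small a) _; apply: (is_submod_Phi_mono sV); lia.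
Qed.

Lemma isB_lift_sub W : is_submod d (Phi str S) W ->
  forall h, (forall a, W (qsrc a) d.-1 *m h a = 0) ->
  isB d (lift_cochain str W (zero_submod X) h).
Proof.
move=> sW h small; apply: isB_lift => a r hr; rewrite /zero_submod.
have /submxP[u ->] : (W (qsrc a) (r + str)%N <= W (qsrc a) d.-1)%MS.
  by apply: (is_submod_Phi_mono sW); lia.
by rewrite -mulmxA small mulmx0 sub0mx.
Qed.

Lemma lift_inj_quot_adds V V' :
  (if str then 2 <= d else 1 <= d)%N ->
  is_submod d (Phi str X) V -> is_submod d (Phi str X) V' ->
  lift_inj str d (full_submod S) V -> lift_inj str d (full_submod S) V' ->
  lift_inj str d (full_submod S) (fun i r => (V i r + V' i r)%MS).
Proof.
move=> hd sV sV' injV injV' h /(lift_kernel_quot hd (is_submod_adds sV sV'))[g small].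
have /fin_all_exists[u Eu] a : exists u,
    h a - qcob g a = u.1 *m V (qtgt a) 0%N + u.2 *m V' (qtgt a) 0%N.
  by apply/sub_addsmxP; apply: small.
have [g1 E1] : qisB (fun a => (u a).1 *m V (qtgt a) 0%N).
  by apply: injV; apply: (isB_lift_quot sV) => a; apply: submxMl.
have [g2 E2] : qisB (fun a => (u a).2 *m V' (qtgt a) 0%N).
  by apply: injV'; apply: (isB_lift_quot sV') => a; apply: submxMl.
exists (fun i => g i + (g1 i + g2 i)) => a.
by rewrite !qcobD -E1 -E2 -Eu subrKC.
Qed.

Lemma lift_inj_sub_cap W W' :
  (if str then 2 <= d else 1 <= d)%N ->
  is_submod d (Phi str S) W -> is_submod d (Phi str S) W' ->
  lift_inj str d W (zero_submod X) -> lift_inj str d W' (zero_submod X) ->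
  lift_inj str d (fun i r => (W i r :&: W' i r)%MS) (zero_submod X).
Proof.
move=> hd sW sW' injW injW' h /(lift_kernel_sub hd (is_submod_cap sW sW'))[g small].
have /fin_all_exists[u Eu] a : exists u,
    W (qsrc a) d.-1 *m u = W (qsrc a) d.-1 *m (h a - qcob g a) /\
    W' (qsrc a) d.-1 *m u = 0.
  exact: split_on_capmx.
have [g1 E1] : qisB (fun a => h a - qcob g a - u a).
  by apply: injW; apply: (isB_lift_sub sW) => a; rewrite mulmxBr (Eu a).1 subrr.
have [g2 E2] : qisB u.
  by apply: injW'; apply: (isB_lift_sub sW') => a; apply: (Eu a).2.
exists (fun i => g i + (g1 i + g2 i)) => a.
by rewrite !qcobD -E1 -E2 subrK subrKC.
Qed.

End Cases.

Theorem lemma3p8 (Q : quiver) (S X : qrep Q) (str : bool) (d : nat) :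
  (if str then 2 <= d else 1 <= d)%N ->
  ext1KQ_dim_is S X 1 ->
  (forall V V' : forall (i : 'I_(nv Q)) (r : nat), 'M[K]_(qdim X i),
     is_submod d (Phi str X) V -> is_submod d (Phi str X) V' ->
     ext1_dim_is d (Phi str S) (quotmod (Phi str X) V) 1 ->
     ext1_dim_is d (Phi str S) (quotmod (Phi str X) V') 1 ->
     ext1_dim_is d (Phi str S)
       (quotmod (Phi str X) (fun i r => (V i r + V' i r)%MS)) 1) /\
  (forall W W' : forall (i : 'I_(nv Q)) (r : nat), 'M[K]_(qdim S i),
     is_submod d (Phi str S) W -> is_submod d (Phi str S) W' ->
     ext1_dim_is d (submod (Phi str S) W) (Phi str X) 1 ->
     ext1_dim_is d (submod (Phi str S) W') (Phi str X) 1 ->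
     ext1_dim_is d (submod (Phi str S) (fun i r => (W i r :&: W' i r)%MS))
       (Phi str X) 1).
Proof.
move=> hd HK; split=> [V V' sV sV' EV EV' | W W' sW sW' EW EW'].
- apply: (ext1_dim_of_lift_bij (lift_onto_quot (is_submod_adds sV sV')) _ HK).
  apply: (lift_inj_quot_adds hd sV sV').
    exact: lift_inj_of_dim1 (lift_onto_quot sV) HK EV.
  exact: lift_inj_of_dim1 (lift_onto_quot sV') HK EV'.
- apply: (ext1_dim_of_lift_bij (lift_onto_sub (is_submod_cap sW sW')) _ HK).
  apply: (lift_inj_sub_cap hd sW sW').
    exact: lift_inj_of_dim1 (lift_onto_sub sW) HK EW.
  exact: lift_inj_of_dim1 (lift_onto_sub sW') HK EW'.
Qed.
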